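(* Consider the $nm$ iterations $(i,j)$, $1\le i\le n$, $1\le j\le m$, of the Triangular Basis Algorithm, each viewed as an atomic transformation of the full state (the $x_j$, $\mathrm{used}_j$, $av_i$, $b_i$). Equip the index set with the partial order $(i,j)\le(k,l)\iff i\le k \text{ and } j\le l$. Then for every total ordering of the iterations that extends this partial order (i.e. $(i,j)$ is executed before $(k,l)$ whenever $(i,j)<(k,l)$), executing the iterations in that order from the initial state produces the same final state as the standard lexicographic execution order. In particular, all iterations $(i,j)$ with a fixed value of $i+j$ may be executed in any order (in parallel).
   Context: All arithmetic is over $\mathbb{F}_2$ ($+$ is XOR, $\wedge$ is AND). For a vector $v\in\{0,1\}^n$, $v[i]$ is its $i$-th bit and $v[a..b]$ the substring of bits $a$ through $b$ (empty if $a>b$). Triangular Basis Algorithm. Input: $x_1,\dots,x_m\in\{0,1\}^n$ (modified in place). Auxiliary variables: bits $\mathrm{used}_j$ ($1\le j\le m$) initialized to $0$; bits $av_i$ ($1\le i\le n$) initialized to $1$; strings $b_i[(i+1)..n]$ ($1\le i\le n$) initialized to all zeros. The algorithm executes, for $i=1,\dots,n$ (outer loop) and, inside it, for $j=1,\dots,m$ (inner loop), the following four steps in order (iteration $(i,j)$): (1) $\mathrm{used}_j \leftarrow \mathrm{used}_j + (x_j[i]\wedge av_i)$; (2) $av_i\leftarrow av_i + (x_j[i]\wedge \mathrm{used}_j)$ (using the value of $\mathrm{used}_j$ just updated); (3) if $\mathrm{used}_j=1$: $b_i[(i+1)..n]\leftarrow b_i[(i+1)..n]+x_j[(i+1)..n]$;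 (4) if $x_j[i]=1$: $x_j[(i+1)..n]\leftarrow x_j[(i+1)..n]+b_i[(i+1)..n]$. *)

(* Indices are 0-based: row/bit index i : 'I_n (paper's i-1),
   vector index j : 'I_m (paper's j-1). Bits are bool, + is xor (addb), /\ is &&. *)
From mathcomp Require Import all_boot.
Set Implicit Arguments. Unset Strict Implicit. Unset Printing Implicit Defensive.

Record tb_state (n m : nat) := TBState {
  xs   : {ffun 'I_m -> {ffun 'I_n -> bool}};   (* xs j i = x_j[i] *)
  used : {ffun 'I_m -> bool};
  av   : {ffun 'I_n -> bool};
  bs   : {ffun 'I_n -> {ffun 'I_n -> bool}}     (* bs i k = b_i[k], meaningful for k > i *)
}.

Definition tb_init (n m : nat) (x : {ffun 'I_m -> {ffun 'I_n -> bool}}) : tb_state n m :=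
  TBState x [ffun _ => false] [ffun _ => true] [ffun _ => [ffun _ => false]].

Definition tb_step (n m : nat) (s : tb_state n m) (p : 'I_n * 'I_m) : tb_state n m :=
  let: (i, j) := p in
  let xji := xs s j i in
  let u' := used s j (+) (xji && av s i) in
  let used' := [ffun j' => if j' == j then u' else used s j'] in
  let a' := av s i (+) (xji && u') in
  let av' := [ffun i' => if i' == i then a' else av s i'] in
  let bi' := [ffun k : 'I_n => if (i < k) && u' then bs s i k (+) xs s j k else bs s i k] in
  let bs' := [ffun i' => if i' == i then bi' else bs s i'] in
  let xj' := [ffun k : 'I_n => if (i < k) && xji then xs s j k (+) bi' k else xs s j k] in
  let xs' := [ffun j' => if j' == j then xj' else xs s j'] in
  TBState xs' used' av' bs'.

Definition tb_run (n m : nat) (s0 : tb_state n m) (order : seq ('I_n * 'I_m)) : tb_state n m :=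
  foldl (@tb_step n m) s0 order.

Definition lex_order (n m : nat) : seq ('I_n * 'I_m) :=
  [seq (i, j) | i <- enum 'I_n, j <- enum 'I_m].

Definition idx_le (n m : nat) (p q : 'I_n * 'I_m) : bool :=
  (p.1 <= q.1) && (p.2 <= q.2).

Definition linear_extension (n m : nat) (order : seq ('I_n * 'I_m)) : Prop :=
  perm_eq order (lex_order n m) /\
  forall p q : 'I_n * 'I_m, idx_le p q -> p != q -> index p order < index q order.

From mathcomp Require Import all_boot.
From mathcomp Require Import zify.
Set Implicit Arguments. Unset Strict Implicit. Unset Printing Implicit Defensive.

(* Two iterations (i,j) and (k,l) with i <> k and j <> l touch disjoint parts
   of the state: (i,j) reads and writes only x_j, used_j, av_i and b_i.  Hence
   they commute as state transformations, and only iterations sharing a row i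
   or a vector j are "dependent". *)

Lemma index_lt_del (T : eqType) (a b c : T) (t1 t2 : seq T) :
  b != a -> c != a ->
  (index b (t1 ++ a :: t2) < index c (t1 ++ a :: t2)) =
  (index b (t1 ++ t2) < index c (t1 ++ t2)).
Proof.
move=> ne_ba ne_ca.
rewrite !index_cat /= !(eq_sym a) (negbTE ne_ba) (negbTE ne_ca).
have := index_mem b t1; have := index_mem c t1.
by case: (b \in t1); case: (c \in t1); lia.
Qed.

Section FoldReorder.

Variables (T : eqType) (State : Type) (step : State -> T -> State) (dep : rel T).

Hypothesis step_comm :
  forall a b, ~~ dep a b -> forall s, step (step s a) b = step (step s b) a.

Lemma foldl_move_front a t1 t2 s0 : {in t1, forall b, ~~ dep a b} ->
  foldl step s0 (t1 ++ a :: t2) = foldl step (step s0 a) (t1 ++ t2).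
Proof.
elim: t1 s0 => [|b t1 IH] s0 indep //=.
rewrite IH => [|c c_t1]; last by apply: indep; rewrite inE c_t1 orbT.
by rewrite -step_comm // indep // inE eqxx.
Qed.

Lemma foldl_reorder s t : uniq t -> perm_eq s t ->
  (forall b c, b \in s -> c \in s -> dep b c ->
     index b s < index c s -> index b t < index c t) ->
  forall s0, foldl step s0 s = foldl step s0 t.
Proof.
elim: s t => [|a s IH] t uniq_t perm_st same_order s0.
  by move/perm_size: perm_st => /esym/size0nil ->.
have a_t : a \in t by rewrite -(perm_mem perm_st) mem_head.
case/splitPr: a_t uniq_t perm_st same_order => t1 t2 uniq_t perm_st same_order.
have perm_a : perm_eq (t1 ++ a :: t2) (a :: t1 ++ t2).
  by rewrite -[a :: t2]cat1s perm_catCA.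
have /andP [a_t12 uniq_t12] : uniq (a :: t1 ++ t2) by rewrite -(perm_uniq perm_a).
have a_t1 : a \notin t1 by apply: contra a_t12; rewrite mem_cat => ->.
have perm_s : perm_eq s (t1 ++ t2).
  by rewrite -(perm_cons a) (perm_trans perm_st).
have a_s : a \notin s by rewrite (perm_mem perm_s).
(* a comes first in s, so a dependent action would have to precede it in t. *)
have indep : {in t1, forall b, ~~ dep a b}.
  move=> b b_t1; apply/negP => dep_ab.
  have b_s : b \in a :: s by rewrite (perm_mem perm_st) mem_cat b_t1.
  have ne_ba : b != a by apply: contraNneq a_t1 => <-.
  have := same_order a b (mem_head a s) b_s dep_ab.
  rewrite /= eqxx eq_sym (negbTE ne_ba) => /(_ isT).
  have lt_b : index b t1 < size t1 by rewrite index_mem.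
  by rewrite !index_cat (negbTE a_t1) b_t1 /= eqxx; lia.
rewrite /= foldl_move_front //; apply: IH => // b c b_s c_s dep_bc.
have ne_ba : b != a by apply: contraNneq a_s => <-.
have ne_ca : c != a by apply: contraNneq a_s => <-.
have := same_order b c; rewrite !inE b_s c_s !orbT => /(_ isT isT dep_bc).
by rewrite /= !(eq_sym a) (negbTE ne_ba) (negbTE ne_ca) ltnS index_lt_del.
Qed.

End FoldReorder.

Definition tb_dep (n m : nat) (p q : 'I_n * 'I_m) : bool :=
  (p.1 == q.1) || (p.2 == q.2).

Lemma if_eq_swap (T : eqType) (R : Type) (a j l : T) (X Y Z : R) : j != l ->
  (if a == l then X else if a == j then Y else Z) =
  (if a == j then Y else if a == l then X else Z).
Proof. by move=> ne_jl; case: eqP => // ->; rewrite eq_sym (negbTE ne_jl). Qed.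

(* Independent iterations commute: they update the state at distinct vector
   indices and at distinct row indices. *)
Lemma tb_step_comm n m (p q : 'I_n * 'I_m) : ~~ tb_dep p q ->
  forall s : tb_state n m, tb_step (tb_step s p) q = tb_step (tb_step s q) p.
Proof.
case: p q => i j [k l]; rewrite /tb_dep negb_or /= => /andP [ne_ik ne_jl] s.
have ne_ki : k != i by rewrite eq_sym.
have ne_lj : l != j by rewrite eq_sym.
rewrite /tb_step /=; congr TBState; apply/ffunP => a;
  rewrite !ffunE ?(negbTE ne_ik, negbTE ne_ki, negbTE ne_jl, negbTE ne_lj);
  exact: if_eq_swap.
Qed.

Lemma index_allpairs (A B : eqType) (sa : seq A) (sb : seq B) a b :
  a \in sa -> b \in sb ->
  index (a, b) [seq (x, y) | x <- sa, y <- sb] = index a sa * size sb + index b sb.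
Proof.
move=> + b_sb; elim: sa => [|c sa IH] //=; rewrite index_cat inE.
have [<- _|ne_ca /= a_sa] := eqVneq c a.
  by rewrite index_map ?(map_f (pair c)) // => x y [].
have -> : (a, b) \in [seq (c, y) | y <- sb] = false.
  by apply/negbTE/mapP => -[y _ [eq_ac _]]; rewrite eq_ac eqxx in ne_ca.
by rewrite IH // size_map mulSn addnA.
Qed.

Lemma index_lex n m (i : 'I_n) (j : 'I_m) :
  index (i, j) (lex_order n m) = i * m + j.
Proof.
by rewrite /lex_order index_allpairs ?mem_enum // !index_enum_ord size_enum_ord.
Qed.

Lemma lex_order_uniq n m : uniq (lex_order n m).
Proof.
by apply: allpairs_uniq; rewrite ?enum_uniq // => -[a b] [c d] _ _ /= [-> ->].
Qed.

Lemma lex_index_mono n m (p q : 'I_n * 'I_m) :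
  idx_le p q -> p != q -> index p (lex_order n m) < index q (lex_order n m).
Proof.
case: p q => i j [k l]; rewrite /idx_le xpair_eqE !index_lex /= => /andP [le_ik le_jl].
have lt_jm := ltn_ord j; case: (ltngtP i k) => [lt_ik _ | lt_ki | /val_inj ->].
- have : i.+1 * m <= k * m by rewrite leq_mul2r lt_ik orbT.
  by rewrite mulSn; lia.
- by rewrite leqNgt lt_ki in le_ik.
- by rewrite eqxx /= ltn_add2l ltn_neqAle le_jl => ->.
Qed.

Lemma tb_dep_comparable n m (p q : 'I_n * 'I_m) :
  tb_dep p q -> idx_le p q || idx_le q p.
Proof.
by rewrite /tb_dep /idx_le => /orP [] /eqP ->; rewrite leqnn /= ?andbT leq_total.
Qed.

Lemma linear_extension_dep_order n m (order : seq ('I_n * 'I_m)) p q :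
  linear_extension order -> tb_dep p q -> index p order < index q order ->
  index p (lex_order n m) < index q (lex_order n m).
Proof.
move=> [_ extends] dep_pq lt_pq.
have ne_pq : p != q by apply: contraTneq lt_pq => ->; rewrite ltnn.
case/orP: (tb_dep_comparable dep_pq) => [le_pq|le_qp]; first exact: lex_index_mono.
by have := extends q p le_qp; rewrite eq_sym ltnNge (ltnW lt_pq) => /(_ ne_pq).
Qed.

Theorem mainTheorem4 (n m : nat) (x : {ffun 'I_m -> {ffun 'I_n -> bool}})
    (order : seq ('I_n * 'I_m)) :
  linear_extension order ->
  tb_run (tb_init x) order = tb_run (tb_init x) (lex_order n m).
Proof.
move=> ext; apply: (@foldl_reorder _ _ _ (@tb_dep n m)).
- exact: tb_step_comm.
- exact: lex_order_uniq.
- by case: ext.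
- by move=> p q _ _; apply: linear_extension_dep_order.
Qed.
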